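(* Let $G$ be a finite simple graph with maximum degree $\Delta$. For every edge $e=uv$ of $G$, $$|F(e)|\le \Delta^2-1-\tfrac12|C_e^{\Delta}|-|T_1(e)|-\tfrac12|T_2(e)|-\tfrac12|T_6(e)|.$$ Moreover, if equality holds, then every vertex in $N(u)\cup N(v)$ has degree $\Delta$.
   Context: $N(w)$ is the open neighborhood of a vertex $w$. Two distinct edges $e,f$ are $1$-neighbors if they share an endvertex, and $2$-neighbors if they share no endvertex but some edge of $G$ shares an endvertex with each of them. $N(e)$ is the set of $1$-neighbors of $e$. $C_e^{\Delta}$ denotes the set of $1$-neighbors of $e$ that lie on a common $3$-cycle with $e$. For a $2$-neighbor $f=xy$ of $e=uv$, let $c(e,f)$ be the number of edges of $G$ joining a vertex of $\{u,v\}$ to a vertex of $\{x,y\}$ (so $1\le c(e,f)\le 4$). The type of $f$ (relative to $e$) is: Type 1 if $c(e,f)=4$; Type 2 if $c(e,f)=3$; Type 3 if $c(e,f)=2$ and some vertex of $f$ is adjacent to both $u$ and $v$; Type 4 if $c(e,f)=2$ and the two joining edges form a matching; Type 5 if $c(e,f)=2$ and some vertex of $e$ is adjacent to both $x$ and $y$; Type 6 if $c(e,f)=1$. $T_i(e)$ is the set of $2$-neighbors of $e$ of Type $i$. $F(e)=N(e)\cup T_1(e)\cup T_2(e)\cup T_3(e)\cup T_4(e)\cup T_5(e)$. *)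

From mathcomp Require Import all_boot all_order all_algebra.
Set Implicit Arguments. Unset Strict Implicit. Unset Printing Implicit Defensive.

(* A finite simple graph: vertex type T : finType, adjacency adj : rel T,
   assumed symmetric and irreflexive (hypotheses of the theorem).
   Edges are represented as 2-element vertex sets {x, y} with adj x y. *)

Section GraphDefs.
Variables (T : finType) (adj : rel T).

Definition nbhd (w : T) : {set T} := [set x | adj w x].

Definition deg (w : T) : nat := #|nbhd w|.

Definition maxdeg : nat := \max_(w : T) deg w.

Definition is_edge (e : {set T}) : bool :=
  [exists x, exists y, adj x y && (e == [set x; y])].

Definition nbr1 (e : {set T}) : {set {set T}} :=
  [set f | is_edge f && (f != e) && (f :&: e != set0)].

Definition nbr2 (e : {set T}) : {set {set T}} :=
  [set f | is_edge f && (f != e) && (f :&: e == set0) &&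
           [exists g, is_edge g && (g :&: e != set0) && (g :&: f != set0)]].

(* C_e^Delta: 1-neighbours of e lying on a common 3-cycle with e;
   for f in N(e) sharing exactly one vertex with e, the third edge of such a
   triangle joins the non-shared endvertex of e to that of f. *)
Definition Ctri (e : {set T}) : {set {set T}} :=
  [set f in nbr1 e | [exists x, exists y,
     [&& x \in e, x \notin f, y \in f, y \notin e & adj x y]]].

(* c(e,f): number of edges joining a vertex of e to a vertex of f
   (for a 2-neighbour f, e and f are disjoint, so such edges correspond
   bijectively to pairs (a,b), a in e, b in f, a ~ b). *)
Definition cef (e f : {set T}) : nat :=
  #|[set p : T * T | [&& p.1 \in e, p.2 \in f & adj p.1 p.2]]|.

Definition Ttype (i : nat) (e : {set T}) : {set {set T}} :=
  [set f in nbr2 e |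
    match i with
    | 1 => cef e f == 4
    | 2 => cef e f == 3
    | 3 => (cef e f == 2) && [exists x in f, [forall y in e, adj x y]]
    | 4 => (cef e f == 2) &&
           [exists a, exists b, exists a', exists b',
              [&& a \in e, a' \in e, b \in f, b' \in f, a != a', b != b',
                  adj a b & adj a' b']]
    | 5 => (cef e f == 2) && [exists x in e, [forall y in f, adj x y]]
    | 6 => cef e f == 1
    | _ => false
    end].

Definition Fset (e : {set T}) : {set {set T}} :=
  nbr1 e :|: Ttype 1 e :|: Ttype 2 e :|: Ttype 3 e :|: Ttype 4 e :|: Ttype 5 e.

End GraphDefs.

From mathcomp Require Import all_boot all_order all_algebra.
From mathcomp Require Import zify lra.
Import GRing.Theory Num.Theory.
Set Implicit Arguments. Unset Strict Implicit. Unset Printing Implicit Defensive.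

(* Write N'(u) = N(u) \ {v} and N'(v) = N(v) \ {u}. Every 1-neighbour of e = uv is
   uw or vw with w in N'(u) or N'(v), and a triangle neighbour uses a common neighbour
   of u and v, which occurs once on each side. For a 2-neighbour f, the c(e,f) edges
   between e and f pair a vertex b of N'(u) or N'(v) with an edge f at b avoiding e;
   a vertex b of N'(u) has at most deg b - 1 - [b ~ v] such edges. Summing,
   4|T_1| + 3|T_2| + 2|T_3 u T_4 u T_5| + |T_6| <= sum_b (deg b - 1 - [b ~ u, v]),
   and together with |N(e)| <= |N'(u)| + |N'(v)| this gives twice the claimed bound,
   with a slack sum_w (Delta - deg w) over N(u) and N(v) that vanishes at equality. *)

Lemma card_sep_sum (aT : finType) (A : {set aT}) (P : pred aT) :
  #|[set x in A | P x]| = \sum_(x in A) P x.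
Proof.
rewrite -sum1_card (eq_bigl (fun x => (x \in A) && P x)) => [|x]; last by rewrite inE.
by rewrite big_mkcondr; apply: eq_bigr => x _; case: (P x).
Qed.

Lemma sum_card_incidence (aT bT : finType) (A : {set aT}) (B : {set bT})
    (R : aT -> bT -> bool) :
  \sum_(a in A) #|[set b in B | R a b]| = \sum_(b in B) #|[set a in A | R a b]|.
Proof.
under eq_bigr do rewrite card_sep_sum.
by rewrite exchange_big; apply: eq_bigr => b _; rewrite card_sep_sum.
Qed.

Lemma card_imsetU2_le (aT rT : finType) (f g : aT -> rT) (A B : {set aT}) :
  #|f @: A :|: g @: B| <= #|A| + #|B|.
Proof.
exact: leq_trans (leq_card_setU _ _) (leq_add (leq_imset_card _ _) (leq_imset_card _ _)).
Qed.

Lemma set2_eq_other (aT : finType) (z p q : aT) : z \in [set p; q] -> z != p -> z = q.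
Proof. by case/set2P=> ->; rewrite ?eqxx. Qed.

Section Graph.
Variables (T : finType) (adj : rel T).
Hypotheses (adj_sym : symmetric adj) (adj_irr : irreflexive adj).

Local Notation Delta := (maxdeg adj).
Local Notation N := (nbhd adj).
Local Notation deg := (deg adj).

Lemma deg_le_maxdeg w : deg w <= Delta.
Proof. exact: leq_bigmax. Qed.

Lemma adj_neq x y : adj x y -> x != y.
Proof. by apply: contraTneq => ->; rewrite adj_irr. Qed.

Lemma is_edge_through f z :
  is_edge adj f -> z \in f -> exists2 w, adj z w & f = [set z; w].
Proof.
case/existsP=> x /existsP[y /andP[xy /eqP->]].
rewrite !inE => /orP[]/eqP->; first by exists y.
by exists x; rewrite 1?adj_sym // setUC.
Qed.

Definition nbr2_through (e : {set T}) (b : T) : {set {set T}} :=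
  [set f in nbr2 adj e | b \in f].

Lemma card_nbr2_through_le e b : #|nbr2_through e b| <= #|N b :\: e|.
Proof.
apply: leq_trans (leq_imset_card (fun y => [set b; y]) _).
apply/subset_leq_card/subsetP => f; rewrite !inE => /andP[/andP[/andP[/andP[f_edge _]]]].
rewrite setI_eq0 => fe _ bf.
have [w bw f_eq] := is_edge_through f_edge bf.
apply/imsetP; exists w => //; rewrite !inE bw andbT.
by rewrite (disjointFr fe) // f_eq !inE eqxx orbT.
Qed.

Definition nbr2_cef2 (e : {set T}) : {set {set T}} :=
  [set f in nbr2 adj e | cef adj e f == 2].

Lemma weighted_types_le e :
  4 * #|Ttype adj 1 e| + 3 * #|Ttype adj 2 e| + 2 * #|nbr2_cef2 e| + #|Ttype adj 6 e|
    <= \sum_(f in nbr2 adj e) cef adj e f.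
Proof.
rewrite !card_sep_sum !big_distrr -!big_split /=.
by apply: leq_sum => f _; case: (cef adj e f) => [|[|[|[|[|n]]]]].
Qed.

Lemma card_Fset_le e :
  #|Fset adj e| <= #|nbr1 adj e| + #|Ttype adj 1 e| + #|Ttype adj 2 e| + #|nbr2_cef2 e|.
Proof.
have T345_sub i : 2 < i < 6 -> Ttype adj i e \subset nbr2_cef2 e.
  case: i => [|[|[|[|[|[|i]]]]]] // _; apply/subsetP => f;
    by rewrite !inE => /andP[-> /andP[-> _]].
have F_sub : Fset adj e \subset
    nbr1 adj e :|: Ttype adj 1 e :|: Ttype adj 2 e :|: nbr2_cef2 e.
  rewrite /Fset -!setUA; do 3![apply: setUS].
  by rewrite !subUset !T345_sub.
apply: leq_trans (subset_leq_card F_sub) _.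
apply: leq_trans (leq_card_setU _ _) _; rewrite leq_add2r.
apply: leq_trans (leq_card_setU _ _) _; rewrite leq_add2r.
exact: leq_card_setU.
Qed.

Section Edge.
Variables x y : T.
Hypothesis xy : adj x y.
Local Notation e := [set x; y].

Lemma deg_eq_side : deg x = #|N x :\ y|.+1.
Proof. by rewrite /deg (cardsD1 y) !inE xy. Qed.

Lemma nbr1_at f : f \in nbr1 adj e ->
  (exists2 w, w \in N x :\ y & f = [set x; w]) \/
  (exists2 w, w \in N y :\ x & f = [set y; w]).
Proof.
rewrite inE => /andP[/andP[f_edge f_ne] /set0Pn[z]]; rewrite inE => /andP[zf ze].
have [w zw f_eq] := is_edge_through f_edge zf.
move: ze f_ne; rewrite f_eq !inE => /orP[]/eqP z_eq; subst z => f_ne.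
- by left; exists w; rewrite // !inE zw andbT; apply: contraNneq f_ne => ->.
- right; exists w; rewrite // !inE zw andbT.
  by apply: contraNneq f_ne => ->; rewrite setUC.
Qed.

Lemma nbr1_sub :
  nbr1 adj e \subset
    [set [set x; w] | w in N x :\ y] :|: [set [set y; w] | w in N y :\ x].
Proof.
apply/subsetP => f /nbr1_at[][w w_side ->]; rewrite in_setU.
- by apply/orP; left; apply/imsetP; exists w.
- by apply/orP; right; apply/imsetP; exists w.
Qed.

Lemma card_nbr1_le : #|nbr1 adj e| <= #|N x :\ y| + #|N y :\ x|.
Proof. exact: leq_trans (subset_leq_card nbr1_sub) (card_imsetU2_le _ _ _ _). Qed.

Lemma Ctri_sub :
  Ctri adj e \subset
    [set [set x; w] | w in N x :&: N y] :|: [set [set y; w] | w in N x :&: N y].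
Proof.
apply/subsetP => f; rewrite inE.
case/andP=> f1 /existsP[a /existsP[c /and5P[ae af cf ce ac]]].
case/nbr1_at: f1 => [][w w_side f_eq]; move: af cf w_side; rewrite f_eq !inE !negb_or.
- move=> /andP[a_ne _] /orP[]/eqP c_eq /andP[_ xw]; subst c.
    by rewrite !inE eqxx in ce.
  rewrite (set2_eq_other ae a_ne) in ac.
  by apply/orP; left; apply/imsetP; exists w; rewrite // !inE xw ac.
- move=> /andP[a_ne _] /orP[]/eqP c_eq /andP[_ yw]; subst c.
    by rewrite !inE eqxx orbT in ce.
  rewrite setUC in ae; rewrite (set2_eq_other ae a_ne) in ac.
  by apply/orP; right; apply/imsetP; exists w; rewrite // !inE ac yw.
Qed.

Lemma card_Ctri_le : #|Ctri adj e| <= 2 * #|N x :&: N y|.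
Proof.
rewrite mul2n -addnn.
exact: leq_trans (subset_leq_card Ctri_sub) (card_imsetU2_le _ _ _ _).
Qed.

Lemma nbr2_through_deg_le b : adj x b ->
  #|nbr2_through e b| + 1 + adj y b + (Delta - deg b) <= Delta.
Proof.
move=> xb.
have meets_e : 1 + adj y b <= #|N b :&: e|.
  case yb: (adj y b).
  - have /setIidPr-> : e \subset N b by rewrite subUset !sub1set !inE !(adj_sym b) xb yb.
    by rewrite cards2 adj_neq.
  - by rewrite card_gt0; apply/set0Pn; exists x; rewrite !inE eqxx adj_sym xb.
have := card_nbr2_through_le e b; have := cardsID e (N b); have := deg_le_maxdeg b.
rewrite /deg; lia.
Qed.

Lemma sum_adj_side : \sum_(b in N x :\ y) adj y b = #|N x :&: N y|.
Proof.
rewrite -card_sep_sum; apply: eq_card => b; rewrite !inE.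
by case: eqP => [->|]; rewrite ?adj_irr ?andbF.
Qed.

Lemma sum_nbr2_through_side_le :
  \sum_(b in N x :\ y) #|nbr2_through e b| + #|N x :\ y| + #|N x :&: N y|
    + \sum_(b in N x :\ y) (Delta - deg b) <= #|N x :\ y| * Delta.
Proof.
rewrite -sum_nat_const -sum_adj_side -sum1_card -!big_split /=.
by apply: leq_sum => b; rewrite !inE => /andP[_ xb]; apply: nbr2_through_deg_le.
Qed.

Lemma cef_le_sides (f : {set T}) : [disjoint f & e] ->
  cef adj e f <= #|[set b in N x :\ y | b \in f]| + #|[set b in N y :\ x | b \in f]|.
Proof.
move=> fe.
have edges_sub : [set p : T * T | [&& p.1 \in e, p.2 \in f & adj p.1 p.2]] \subset
    [set (x, b) | b in [set b in N x :\ y | b \in f]]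
    :|: [set (y, b) | b in [set b in N y :\ x | b \in f]].
  apply/subsetP => -[a b]; rewrite inE /= => /and3P[ae bf ab].
  have := disjointFr fe bf; rewrite !inE => /norP[/negPf bx /negPf by_].
  case/set2P: ae ab => -> ab.
  - by apply/orP; left; apply/imsetP; exists b; rewrite // !inE by_ ab bf.
  - by apply/orP; right; apply/imsetP; exists b; rewrite // !inE bx ab bf.
exact: leq_trans (subset_leq_card edges_sub) (card_imsetU2_le _ _ _ _).
Qed.

End Edge.

Section Count.
Variables u v : T.
Hypothesis uv : adj u v.
Local Notation e := [set u; v].

Lemma sum_cef_le :
  \sum_(f in nbr2 adj e) cef adj e f
    <= \sum_(b in N u :\ v) #|nbr2_through e b| + \sum_(b in N v :\ u) #|nbr2_through e b|.
Proof.
rewrite (sum_card_incidence (N u :\ v)) (sum_card_incidence (N v :\ u)) -big_split /=.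
apply: leq_sum => f; rewrite inE setI_eq0 => /andP[/andP[_ fe] _].
exact: cef_le_sides.
Qed.

Lemma double_count_bound :
  2 * #|Fset adj e| + #|Ctri adj e| + 2 * #|Ttype adj 1 e| + #|Ttype adj 2 e|
  + #|Ttype adj 6 e| + 2
  + (\sum_(b in N u) (Delta - deg b) + \sum_(b in N v) (Delta - deg b)) <= 2 * Delta ^ 2.
Proof.
have vu : adj v u by rewrite adj_sym.
have := card_Fset_le e; have := card_nbr1_le u v; have := card_Ctri_le u v.
have := weighted_types_le e; have := sum_cef_le.
have := sum_nbr2_through_side_le uv; have := sum_nbr2_through_side_le vu.
rewrite [[set v; u]]setUC setIC.
have u_nv : u \in N v by rewrite inE.
have v_nu : v \in N u by rewrite inE.
rewrite (big_setD1 _ v_nu) (big_setD1 _ u_nv) /=.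
have du := deg_le_maxdeg u; have dv := deg_le_maxdeg v.
rewrite (deg_eq_side uv) (deg_eq_side vu) in du dv *.
have := leq_mul du (leqnn Delta); have := leq_mul dv (leqnn Delta).
rewrite -mulnn; lia.
Qed.

Lemma full_degree_of_count_eq :
  2 * #|Fset adj e| + #|Ctri adj e| + 2 * #|Ttype adj 1 e| + #|Ttype adj 2 e|
  + #|Ttype adj 6 e| + 2 = 2 * Delta ^ 2 ->
  forall w, w \in N u :|: N v -> deg w = Delta.
Proof.
move=> count_eq w w_uv; have := double_count_bound; rewrite count_eq.
rewrite -[X in _ <= X]addn0 leq_add2l leqn0 addn_eq0 !sum_nat_eq0.
case/andP=> /forallP full_u /forallP full_v.
apply/eqP; rewrite eqn_leq deg_le_maxdeg -subn_eq0.
by case/setUP: w_uv => [/(implyP (full_u w))|/(implyP (full_v w))].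
Qed.

End Count.

End Graph.

Local Open Scope ring_scope.

Lemma rat_bound_of_nat (F C t1 t2 t6 D : nat) :
  (2 * F + C + 2 * t1 + t2 + t6 + 2 <= 2 * D ^ 2)%N ->
  (F%:R : rat) <= D%:R ^+ 2 - 1 - C%:R / 2 - t1%:R - t2%:R / 2 - t6%:R / 2
  /\
  ((F%:R : rat) = D%:R ^+ 2 - 1 - C%:R / 2 - t1%:R - t2%:R / 2 - t6%:R / 2 ->
   (2 * F + C + 2 * t1 + t2 + t6 + 2 = 2 * D ^ 2)%N).
Proof.
rewrite -(ler_nat rat) !natrD !natrM expr2 => count_le.
split=> [|F_eq]; first lra.
by apply/eqP; rewrite -(eqr_nat rat) !natrD !natrM; apply/eqP; lra.
Qed.

Theorem mainTheorem9 (T : finType) (adj : rel T)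
  (adj_sym : symmetric adj) (adj_irr : irreflexive adj)
  (u v : T) (huv : adj u v) :
  let e := [set u; v] in
  let D := (maxdeg adj)%:R : rat in
  (#|Fset adj e|%:R : rat) <=
    D ^+ 2 - 1 - (#|Ctri adj e|%:R) / 2 - #|Ttype adj 1 e|%:R
    - (#|Ttype adj 2 e|%:R) / 2 - (#|Ttype adj 6 e|%:R) / 2
  /\
  ((#|Fset adj e|%:R : rat) =
    D ^+ 2 - 1 - (#|Ctri adj e|%:R) / 2 - #|Ttype adj 1 e|%:R
    - (#|Ttype adj 2 e|%:R) / 2 - (#|Ttype adj 6 e|%:R) / 2 ->
   forall w : T, w \in nbhd adj u :|: nbhd adj v -> deg adj w = maxdeg adj).
Proof.
move=> e D.
have count_le := leq_trans (leq_addr _ _) (double_count_bound adj_sym adj_irr huv).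
have [bound count_eq] := rat_bound_of_nat count_le.
by split=> // /count_eq; apply: full_degree_of_count_eq.
Qed.
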